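(* Suppose all edge probabilities $p_{ij}$ and the community size $r$ are known, and fix $\epsilon>0$. Consider the scan test that rejects the null hypothesis (outputs $1$) if and only if \[ T^{\mathsf k}:=\max_{D\subseteq V,\ 1\le|D|\le r}T^{\mathsf k}_D\ \ge\ 1+\frac{\epsilon}{2}. \] This test is asymptotically powerful provided the following three conditions hold: $r=o(n)$; $\mathbb{E}_C[e(D^\star_C)]\to\infty$ for all $C\subseteq V$ with $|C|=r$; and for every $C\subseteq V$ with $|C|=r$, \[ \max_{\emptyset\ne D\subseteq C}\frac{\mathbb{E}_0[e(D)]\,h(\rho_C-1)}{|D|\log(n/|D|)}\ge1+\epsilon . \]
   Context: Setting. For each $n$ let $V=\{1,\dots,n\}$, let $p_{ij}=p_{ji}\in[0,1]$ ($i\ne j$) be edge probabilities, let $r=r_n$ be a community size, and for every $C\subseteq V$ with $|C|=r$ let $\rho_C>1$ be a scaling with $\rho_Cp_{ij}\le1$ for $i,j\in C$. All of these may depend on $n$, and limits are as $n\to\infty$. One observes a simple undirected graph on $V$ with adjacency matrix $A$. Under $\mathbb{P}_0$ the $A_{ij}$, $i<j$, are independent $\mathrm{Bern}(p_{ij})$. Under $\mathbb{P}_C$ ($|C|=r$) they are independent with $A_{ij}\sim\mathrm{Bern}(\rho_Cp_{ij})$ if $i,j\in C$ and $\mathrm{Bern}(p_{ij})$ otherwise. $\mathbb{E}_0$ and $\mathbb{E}_C$ are the corresponding expectations. A test $\psi_n$ (a map from graphs to $\{0,1\}$) has worst-case risk $R_n(\psi_n)=\mathbb{P}_0(\psi_n\ne0)+\max_{|C|=r}\mathbb{P}_C(\psi_n\ne1)$.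 It is asymptotically powerful if $R_n(\psi_n)\to0$. Notation. $e(D)=\sum_{i<j,\ i,j\in D}A_{ij}$. $h(x)=(x+1)\log(x+1)-x$. $[x]_+=\max\{x,0\}$. For $D\subseteq V$, \[ T^{\mathsf k}_D=\frac{\mathbb{E}_0[e(D)]\,h\big([e(D)/\mathbb{E}_0[e(D)]-1]_+\big)}{|D|\log(n/|D|)}, \] with the convention $T^{\mathsf k}_D=0$ when $\mathbb{E}_0[e(D)]=0$. For $C$ with $|C|=r$, $D^\star_C$ denotes a maximizer of $\frac{\mathbb{E}_0[e(D)]}{|D|\log(n/|D|)}$ over nonempty $D\subseteq C$ (the ''most informative subgraph''). *)

From HB Require Import structures.
From mathcomp Require Import all_boot all_order all_algebra.
From mathcomp Require Import all_classical all_reals all_analysis.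
Set Implicit Arguments. Unset Strict Implicit. Unset Printing Implicit Defensive.
Import Order.TTheory GRing.Theory Num.Theory.
Import numFieldNormedType.Exports.
Local Open Scope ring_scope.

(* Potential edges {i,j} of the complete graph on V = 'I_n, encoded as i < j. *)
Definition edge (n : nat) := {e : 'I_n * 'I_n | (e.1 < e.2)%N}.

Definition graph (n : nat) := {ffun edge n -> bool}.

Section Model.
Variable R : realType.
Variable n : nat.

Definition gprob (q : edge n -> R) (A : graph n) : R :=
  \prod_(e : edge n) (if A e then q e else 1 - q e).

Definition Pr (q : edge n -> R) (E : pred (graph n)) : R :=
  \sum_(A : graph n | E A) gprob q A.

Definition Ex (q : edge n -> R) (X : graph n -> R) : R :=
  \sum_(A : graph n) gprob q A * X A.

Definition q0 (p : 'I_n -> 'I_n -> R) : edge n -> R :=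
  fun e => p (val e).1 (val e).2.

Definition qC (p : 'I_n -> 'I_n -> R) (rhoC : R) (C : {set 'I_n}) : edge n -> R :=
  fun e => if ((val e).1 \in C) && ((val e).2 \in C)
           then rhoC * p (val e).1 (val e).2 else p (val e).1 (val e).2.

Definition eD (D : {set 'I_n}) (A : graph n) : R :=
  \sum_(e : edge n | ((val e).1 \in D) && ((val e).2 \in D)) (A e)%:R.

Definition hfun (x : R) : R := (x + 1) * ln (x + 1) - x.

Definition TkD (p : 'I_n -> 'I_n -> R) (D : {set 'I_n}) (A : graph n) : R :=
  let m := Ex (q0 p) (eD D) in
  if m == 0 then 0
  else m * hfun (Num.max (eD D A / m - 1) 0) / (#|D|%:R * ln (n%:R / #|D|%:R)).

(* T^k = max over D with 1 <= |D| <= r of T^k_D (all T^k_D are >= 0). *)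
Definition Tk (p : 'I_n -> 'I_n -> R) (r : nat) (A : graph n) : R :=
  \big[Num.max/0]_(D : {set 'I_n} | (0 < #|D| <= r)%N) TkD p D A.

Definition scan_test (p : 'I_n -> 'I_n -> R) (r : nat) (eps : R) (A : graph n) : bool :=
  1 + eps / 2 <= Tk p r A.

Definition risk (p : 'I_n -> 'I_n -> R) (r : nat) (rho : {set 'I_n} -> R)
    (psi : graph n -> bool) : R :=
  Pr (q0 p) (fun A => psi A != false)
  + \big[Num.max/0]_(C : {set 'I_n} | #|C| == r) Pr (qC p (rho C) C) (fun A => psi A != true).

Definition info (p : 'I_n -> 'I_n -> R) (D : {set 'I_n}) : R :=
  Ex (q0 p) (eD D) / (#|D|%:R * ln (n%:R / #|D|%:R)).

Definition is_most_informative (p : 'I_n -> 'I_n -> R) (C D : {set 'I_n}) : Prop :=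
  D \subset C /\ D != finset.set0 /\
  forall D' : {set 'I_n}, D' \subset C -> D' != finset.set0 -> info p D' <= info p D.

End Model.

Arguments gprob {R n}. Arguments Pr {R n}. Arguments Ex {R n}. Arguments q0 {R n}.
Arguments qC {R n}. Arguments eD {R n}. Arguments hfun {R}. Arguments TkD {R n}.
Arguments Tk {R n}. Arguments scan_test {R n}. Arguments risk {R n}. Arguments info {R n}.
Arguments is_most_informative {R n}.

From mathcomp Require Import all_boot all_order all_algebra.
From mathcomp Require Import all_classical all_reals all_analysis.
From mathcomp Require Import ring lra.
Import Order.TTheory GRing.Theory Num.Theory.
Import numFieldNormedType.Exports.
Local Open Scope ring_scope.

Set Implicit Arguments. Unset Strict Implicit. Unset Printing Implicit Defensive.

(* Under the null, [T_D >= tau] forces [e(D)] above the level [s] at which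
   [E_0 e(D) h(s / E_0 e(D) - 1) = tau |D| log(n/|D|)], so by the Chernoff bound
   it has probability at most [(|D|/n)^(tau |D|)].  There are at most [(e n/k)^k]
   sets of size [k], so a union bound over [1 <= |D| <= r] with [tau = 1 + eps/2]
   leaves a geometric series with ratio [e (r/n)^(eps/2)], which vanishes since
   [r = o(n)].

   Under [P_C], the most informative subgraph [Ds] of [C] has
   [E_C e(Ds) = rho E_0 e(Ds)], and the detection condition puts its ideal
   statistic [E_0 e(Ds) h(rho - 1) / (|Ds| log(n/|Ds|))] above [1 + eps].  By
   convexity of [h], [T_Ds] stays above [1 + eps/2] unless [e(Ds)] falls below
   its mean by [kappa E_0 e(Ds) h(rho - 1) / log rho], with
   [kappa = (eps/2) / (1 + eps)].  The lower Chernoff bound makes this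
   exponentially unlikely: comparing [h] with its quadratic and its [x log x]
   regimes, the exponent is at least [kappa^2 B / 16] once both [E_C e(Ds)] and
   [log(n/r)] exceed [B]. *)

Section EdgeModel.
Variables (R : realType) (n : nat).
Implicit Types (q : edge n -> R) (D : {set 'I_n}) (E : pred (graph n)).

Definition prob_valued q := forall e, 0 <= q e <= 1.

Definition edge_in D (e : edge n) := ((val e).1 \in D) && ((val e).2 \in D).

Lemma gprob_ge0 q A : prob_valued q -> 0 <= gprob q A.
Proof.
move=> hq; apply: prodr_ge0 => e _; have /andP[q0 q1] := hq e.
by case: (A e); rewrite ?subr_ge0.
Qed.

Lemma Pr_ge0 q E : prob_valued q -> 0 <= Pr q E.
Proof. by move=> hq; apply: sumr_ge0 => A _; apply: gprob_ge0. Qed.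

Lemma Pr_pred0 q E : (forall A, ~~ E A) -> Pr q E = 0.
Proof. by move=> hE; rewrite /Pr big_pred0 // => A; apply: negbTE. Qed.

Lemma Pr_le_Ex q E (Y : graph n -> R) : prob_valued q ->
  (forall A, 0 <= Y A) -> (forall A, E A -> 1 <= Y A) -> Pr q E <= Ex q Y.
Proof.
move=> hq Y0 EY; rewrite /Pr /Ex [leRHS](bigID E) /= -[leLHS]addr0.
apply: lerD; last by apply: sumr_ge0 => A _; rewrite mulr_ge0 ?gprob_ge0.
by apply: ler_sum => A /EY; apply: ler_peMr; apply: gprob_ge0.
Qed.

Lemma Pr_bigcup_le q (I : finType) (P : pred I) E (F : I -> pred (graph n)) :
  prob_valued q -> (forall A, E A -> exists2 i, P i & F i A) ->
  Pr q E <= \sum_(i | P i) Pr q (F i).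
Proof.
move=> hq EF; rewrite /Pr.
under [leRHS]eq_bigr do rewrite big_mkcond /=.
rewrite exchange_big /= big_mkcond /=; apply: ler_sum => A _.
have summand_ge0 i : 0 <= (if F i A then gprob q A else 0).
  by case: (F i A); rewrite ?gprob_ge0.
case: ifP => EA; last by apply: sumr_ge0.
have [i Pi FiA] := EF A EA.
by rewrite (bigD1 i) //= FiA ler_wpDr ?sumr_ge0.
Qed.

Lemma Ex_prod q (f : edge n -> bool -> R) :
  Ex q (fun A => \prod_e f e (A e)) =
  \prod_e (q e * f e true + (1 - q e) * f e false).
Proof.
rewrite /Ex /gprob.
have -> : \prod_e (q e * f e true + (1 - q e) * f e false) =
    \prod_e \sum_(b : bool) (if b then q e else 1 - q e) * f e b.
  by apply: eq_bigr => e _; rewrite big_bool.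
by rewrite bigA_distr_bigA; apply: eq_bigr => A _; rewrite -big_split.
Qed.

Lemma Ex_sum q (I : finType) (P : pred I) (X : I -> graph n -> R) :
  Ex q (fun A => \sum_(i | P i) X i A) = \sum_(i | P i) Ex q (X i).
Proof. by rewrite /Ex; under eq_bigr do rewrite mulr_sumr; rewrite exchange_big. Qed.

Lemma Ex_mulr q (X : graph n -> R) c : Ex q (fun A => X A * c) = Ex q X * c.
Proof. by rewrite /Ex mulr_suml; apply: eq_bigr => A _; rewrite mulrA. Qed.

Lemma Ex_edge q e0 : Ex q (fun A => (A e0)%:R) = q e0.
Proof.
have -> : (fun A : graph n => ((A e0)%:R : R)) =
    (fun A => \prod_e (if e == e0 then ((A e)%:R : R) else 1)).
  by apply: funext => A; rewrite -big_mkcond big_pred1_eq.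
rewrite (Ex_prod q (fun e b => if e == e0 then b%:R else 1)) (bigD1 e0) //= eqxx.
rewrite big1 => [|e /negPf ->]; first by rewrite mulr1 mulr0 addr0 mulr1.
by rewrite !mulr1 subrKC.
Qed.

Lemma Ex_eD q D : Ex q (eD D) = \sum_(e | edge_in D e) q e.
Proof.
rewrite /eD (Ex_sum q (edge_in D) (fun e A => (A e)%:R)).
by apply: eq_bigr => e _; rewrite Ex_edge.
Qed.

Lemma Ex_eD_ge0 q D : prob_valued q -> 0 <= Ex q (eD D).
Proof. by move=> hq; rewrite Ex_eD sumr_ge0 // => e _; case/andP: (hq e). Qed.

Lemma Ex_expR_eD q D (l : R) :
  Ex q (fun A => expR (l * eD D A)) =
  \prod_(e | edge_in D e) (q e * expR l + (1 - q e)).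
Proof.
have -> : (fun A => expR (l * eD D A)) = (fun A : graph n =>
    \prod_e (fun e b => if edge_in D e then expR (l * b%:R) else 1) e (A e)).
  by apply: funext => A; rewrite /eD mulr_sumr expR_sum big_mkcond.
rewrite (Ex_prod q (fun e b => if edge_in D e then expR (l * b%:R) else 1)).
rewrite [RHS]big_mkcond; apply: eq_bigr => e _ /=.
by case: ifP; rewrite ?mulr1 ?mulr0 ?expR0 ?mulr1 // subrKC.
Qed.

Lemma Ex_expR_eD_le q D (l : R) : prob_valued q ->
  Ex q (fun A => expR (l * eD D A)) <= expR ((expR l - 1) * Ex q (eD D)).
Proof.
move=> hq; rewrite Ex_expR_eD Ex_eD mulr_sumr expR_sum.
apply: ler_prod => e _; have /andP[q0 q1] := hq e.
rewrite addr_ge0 ?mulr_ge0 ?expR_ge0 ?subr_ge0 //=.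
by have := expR_ge1Dx ((expR l - 1) * q e); congr (_ <= _); ring.
Qed.

Lemma Pr_upper_tail q D E s : prob_valued q ->
  0 < Ex q (eD D) -> Ex q (eD D) <= s -> (forall A, E A -> s <= eD D A) ->
  Pr q E <= expR (- (Ex q (eD D) * hfun (s / Ex q (eD D) - 1))).
Proof.
move=> hq; set m := Ex q (eD D) => m0 ms Es.
have s0 : 0 < s by apply: lt_le_trans ms.
have sm0 : 0 < s / m by apply: divr_gt0.
set l := ln (s / m).
have l0 : 0 <= l by apply: ln_ge0; rewrite ler_pdivlMr // mul1r.
apply: (le_trans (@Pr_le_Ex q E (fun A => expR (l * eD D A) * expR (- (l * s))) hq _ _)).
- by move=> A; rewrite mulr_ge0 ?expR_ge0.
- move=> A /Es sA; rewrite -expRD -expR0 ler_expR subr_ge0.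
  exact: ler_wpM2l.
rewrite Ex_mulr; apply: (le_trans (ler_wpM2r (expR_ge0 _) (Ex_expR_eD_le D l hq))).
rewrite -expRD ler_expR /l lnK ?posrE // /hfun subrK.
rewrite -/m le_eqVlt; apply/orP; left; apply/eqP.
by field; rewrite gt_eqF.
Qed.

Lemma Pr_lower_tail q D E t : prob_valued q ->
  0 < Ex q (eD D) -> 0 <= t -> (forall A, E A -> eD D A < Ex q (eD D) - t) ->
  Pr q E <= expR (- (t ^+ 2 / (4 * Ex q (eD D)))).
Proof.
move=> hq; set m := Ex q (eD D) => m0 t0 Et.
set l := t / (2 * m).
have l0 : 0 <= l by rewrite divr_ge0 // mulr_ge0 // ltW.
apply: (le_trans (@Pr_le_Ex q E (fun A => expR (- l * eD D A) * expR (l * (m - t))) hq _ _)).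
- by move=> A; rewrite mulr_ge0 ?expR_ge0.
- move=> A /Et /ltW tA; rewrite -expRD -expR0 ler_expR mulNr addrC subr_ge0.
  exact: ler_wpM2l.
rewrite Ex_mulr; apply: (le_trans (ler_wpM2r (expR_ge0 _) (Ex_expR_eD_le D (- l) hq))).
rewrite -expRD ler_expR -/m.
have expRN_le : expR (- l) <= 1 - l + l ^+ 2.
  have l1 : 0 < 1 + l by lra.
  rewrite -(ler_pM2r l1); apply: (@le_trans _ _ 1).
    by rewrite expRN mulrC ler_pdivrMr ?expR_gt0 // mul1r expR_ge1Dx.
  have -> : (1 - l + l ^+ 2) * (1 + l) = 1 + l ^+ 3 by ring.
  by rewrite lerDl exprn_ge0.
have : (expR (- l) - 1) * m <= (l ^+ 2 - l) * m by apply: ler_wpM2r; [exact: ltW | lra].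
have -> : - (t ^+ 2 / (4 * m)) = l ^+ 2 * m - l * t by rewrite /l; field; rewrite gt_eqF.
lra.
Qed.

End EdgeModel.

Section Hfun.
Variable R : realType.
Implicit Types a x : R.

Lemma hfun0 : hfun (0 : R) = 0.
Proof. by rewrite /hfun add0r ln1 mulr0 subr0. Qed.

(* [hfun] is convex, with derivative [ln (x + 1)]. *)
Lemma hfun_tangent a x : 0 <= a -> 0 <= x ->
  hfun a + ln (a + 1) * (x - a) <= hfun x.
Proof.
move=> a0 x0; rewrite /hfun.
have a1 : 0 < a + 1 by rewrite ltr_wpDl.
have x1 : 0 < x + 1 by rewrite ltr_wpDl.
have y1 : -1 < (a + 1) / (x + 1) - 1 by rewrite ltrBrDl subrr divr_gt0.
have := le_ln1Dx y1; rewrite subrKC ln_div ?posrE // => /(ler_wpM2l (ltW x1)).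
have -> : (x + 1) * ((a + 1) / (x + 1) - 1) = a - x by field; rewrite gt_eqF.
rewrite mulrBr; lra.
Qed.

Lemma hfun_ge0 a : 0 <= a -> 0 <= hfun a.
Proof. by move=> a0; have := hfun_tangent (lexx 0) a0; rewrite hfun0 !add0r ln1 mul0r. Qed.

Lemma hfun_le_mul_ln a : 0 <= a -> hfun a <= a * ln (a + 1).
Proof.
move=> a0; have := @le_ln1Dx R a; rewrite addrC => /(_ (lt_le_trans (ltrN10 R) a0)).
rewrite /hfun mulrDl mul1r; lra.
Qed.

Lemma hfun_ge_sqr_ln a : 0 <= a -> ln (a + 1) <= 2 ->
  (a + 1) * ln (a + 1) ^+ 2 / 4 <= hfun a.
Proof.
move=> a0; set l := ln (a + 1) => l2.
have a1 : 0 < a + 1 by rewrite ltr_wpDl.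
(* [(a + 1) (1 - l/2)^2 <= 1], as [1 - l/2 <= expR (- l/2)] and [(a + 1) expR (- l) = 1]. *)
have hv : (1 - l / 2) ^+ 2 <= (a + 1)^-1.
  have <- : expR (- (l / 2)) ^+ 2 = (a + 1)^-1.
    by rewrite -expRM_natr -mulNr mulfVK ?pnatr_eq0 // expRN lnK.
  apply: lerXn2r; rewrite ?nnegrE ?expR_ge0 //; last exact: expR_ge1Dx.
  by rewrite subr_ge0 ler_pdivrMr //; lra.
have : (a + 1) * (1 - l / 2) ^+ 2 <= 1.
  by rewrite -[leRHS](mulfV (lt0r_neq0 a1)) ler_wpM2l // ltW.
have -> : (a + 1) * (1 - l / 2) ^+ 2 = (a + 1) - (a + 1) * l + (a + 1) * l ^+ 2 / 4.
  by field.
rewrite /hfun -/l; lra.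
Qed.

Lemma hfun_ge_ln a : 0 <= a -> 2 <= ln (a + 1) -> (a + 1) * ln (a + 1) / 2 <= hfun a.
Proof.
move=> a0; set l := ln (a + 1) => l2; rewrite /hfun -/l.
have : (a + 1) * 2 <= (a + 1) * l by rewrite ler_wpM2l // addr_ge0.
lra.
Qed.

End Hfun.

Section Deviation.
Variable R : realType.
Implicit Types eps m a : R.

Definition margin eps := (eps / 2) / (1 + eps).

(* The downward deviation of [e(D)] from its mean [(a + 1) m] under the
   alternative that the scan statistic of [D] can absorb; here [m] is the null
   mean of [e(D)] and [a = rho - 1]. *)
Definition deviation eps m a := margin eps * (m * hfun a) / ln (a + 1).

Lemma margin_gt0 eps : 0 < eps -> 0 < margin eps.
Proof. by move=> e0; rewrite divr_gt0 //; lra. Qed.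

Lemma deviation_ge0 eps m a : 0 < eps -> 0 <= m -> 0 < a -> 0 <= deviation eps m a.
Proof.
move=> e0 m0 a0; have l0 : 0 < ln (a + 1) by apply: ln_gt0; lra.
rewrite divr_ge0 ?(ltW l0) // mulr_ge0 ?(ltW (margin_gt0 e0)) //.
by rewrite mulr_ge0 // hfun_ge0 // ltW.
Qed.

(* By convexity of [hfun] (tangent at [a]), losing [deviation] costs at most
   the fraction [margin eps] of [m * hfun a], i.e. [eps / 2] out of [1 + eps]. *)
Lemma deviation_keeps_threshold eps m a L e : 0 < eps -> 0 < m -> 0 < a ->
  (1 + eps) * L <= m * hfun a -> (a + 1) * m - deviation eps m a <= e ->
  (1 + eps / 2) * L <= m * hfun (Num.max (e / m - 1) 0).
Proof.
move=> e0 m0 a0 hL he.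
set l := ln (a + 1); set H := m * hfun a; set k := margin eps; set x := e / m - 1.
have l0 : 0 < l by apply: ln_gt0; lra.
have k1 : k <= 1 by rewrite /k /margin ler_pdivrMr; lra.
have H0 : 0 <= H by rewrite mulr_ge0 ?hfun_ge0 // ltW.
have lT : l * deviation eps m a = k * H.
  by rewrite /deviation -/l -/k -/H; field; rewrite gt_eqF.
have Tma : deviation eps m a <= m * a.
  rewrite -(ler_pM2l l0) lT; apply: (@le_trans _ _ H); first by rewrite ler_piMl.
  by rewrite mulrCA ler_wpM2l ?(ltW m0) // mulrC hfun_le_mul_ln // ltW.
have mx : m * x = e - m by rewrite /x mulrBr mulrC mulfVK ?gt_eqF // mulr1.
have x0 : 0 <= x by rewrite -(pmulr_rge0 _ m0) mx; lra.
rewrite max_l //; have := ler_wpM2l (ltW m0) (hfun_tangent (ltW a0) x0).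
rewrite mulrDr -/H -/l mulrCA mulrBr mx => tangent.
have : l * ((a + 1) * m - e) <= l * deviation eps m a.
  by rewrite ler_wpM2l ?(ltW l0) //; lra.
rewrite lT => dev.
have -> : (1 + eps / 2) * L = (1 - k) * ((1 + eps) * L) by rewrite /k /margin; field; lra.
have : (1 - k) * ((1 + eps) * L) <= (1 - k) * H by rewrite ler_wpM2l // subr_ge0.
lra.
Qed.

Lemma deviation_sqr_ge eps m a B : 0 < eps -> 0 < m -> 0 < a ->
  B <= m * hfun a -> B <= (a + 1) * m ->
  margin eps ^+ 2 * B / 16 <= deviation eps m a ^+ 2 / (4 * ((a + 1) * m)).
Proof.
move=> e0 m0 a0 BH Bmu.
set l := ln (a + 1); set H := m * hfun a; set mu := (a + 1) * m.
have l0 : 0 < l by apply: ln_gt0; lra.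
have mu0 : 0 < mu by rewrite mulr_gt0 //; lra.
have H0 : 0 <= H by rewrite mulr_ge0 ?hfun_ge0 // ltW.
have V0 : 0 <= mu * l ^+ 2 / 4 by rewrite divr_ge0 // mulr_ge0 ?sqr_ge0 // ltW.
(* Bernstein regime ([l <= 2]) and Poisson regime ([l >= 2]) of [hfun]. *)
have key : B * (mu * l ^+ 2 / 4) <= H ^+ 2.
  have [l2|l2] := lerP l 2.
    have VH : mu * l ^+ 2 / 4 <= H.
      have -> : mu * l ^+ 2 / 4 = m * ((a + 1) * l ^+ 2 / 4) by rewrite /mu; ring.
      by rewrite ler_wpM2l ?(ltW m0) // hfun_ge_sqr_ln // ltW.
    by rewrite expr2; apply: le_trans (ler_wpM2r V0 BH) _; rewrite ler_wpM2l.
  have VH : mu * l / 2 <= H.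
    have -> : mu * l / 2 = m * ((a + 1) * l / 2) by rewrite /mu; ring.
    by rewrite ler_wpM2l ?(ltW m0) // hfun_ge_ln // ltW.
  have sq : (mu * l / 2) ^+ 2 <= H ^+ 2.
    by rewrite lerXn2r ?nnegrE // divr_ge0 // mulr_ge0 // ltW.
  apply: le_trans sq; have -> : (mu * l / 2) ^+ 2 = mu * (mu * l ^+ 2 / 4) by field.
  exact: ler_wpM2r.
have -> : deviation eps m a ^+ 2 / (4 * mu) = margin eps ^+ 2 * H ^+ 2 / (4 * mu * l ^+ 2).
  by rewrite /deviation -/l -/H; field; rewrite !gt_eqF.
have -> : margin eps ^+ 2 * B / 16 =
    margin eps ^+ 2 * (B * (mu * l ^+ 2 / 4)) / (4 * mu * l ^+ 2).
  by field; rewrite !gt_eqF.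
by rewrite ler_wpM2r ?ler_wpM2l ?sqr_ge0 // invr_ge0 mulr_ge0 ?sqr_ge0 // mulr_ge0 // ltW.
Qed.

End Deviation.

Section Counting.
Variable R : realType.

Lemma binom_mul_ratio_le_expR (n k : nat) : (0 < k <= n)%N ->
  'C(n, k)%:R * (k%:R / n%:R) ^+ k <= expR (k%:R : R).
Proof.
move=> /andP[k0 kn]; have nR : (0 : R) < n%:R by rewrite ltr0n (leq_trans k0).
set x : R := k%:R / n%:R; have x0 : 0 <= x by rewrite divr_ge0.
(* the [k]-th term of the binomial expansion of [(x + 1) ^+ n <= expR (n x)] *)
have -> : (k%:R : R) = n%:R * x by rewrite /x mulrC mulfVK ?gt_eqF.
rewrite expRM_natl; apply: (@le_trans _ _ ((x + 1) ^+ n)).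
  rewrite exprD1n (bigD1 (Ordinal (kn : (k < n.+1)%N))) //= mulr_natl lerDl.
  by rewrite sumr_ge0 // => i _; rewrite mulrn_wge0 // exprn_ge0.
by rewrite lerXn2r ?nnegrE ?expR_ge0 ?addr_ge0 // addrC expR_ge1Dx.
Qed.

Lemma ler_ln_ratio (n r k : nat) : (0 < n)%N -> (0 < k <= r)%N ->
  ln (n%:R / r%:R) <= ln (n%:R / k%:R : R).
Proof.
move=> n0 /andP[k0 kr]; have r0 := leq_trans k0 kr.
rewrite ler_ln ?posrE ?divr_gt0 ?ltr0n // ler_pM2l ?ltr0n //.
by rewrite lef_pV2 ?posrE ?ltr0n // ler_nat.
Qed.

Lemma mul_ln_ratio_gt0 (n k : nat) : (0 < k < n)%N -> 0 < k%:R * ln (n%:R / k%:R : R).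
Proof.
move=> /andP[k0 kn]; rewrite mulr_gt0 ?ltr0n // ln_gt0 // ltr_pdivlMr ?ltr0n //.
by rewrite mul1r ltr_nat.
Qed.

Lemma ln_ratio_le_mul (n r k : nat) : (0 < k <= r)%N -> (r < n)%N ->
  ln (n%:R / r%:R) <= k%:R * ln (n%:R / k%:R : R).
Proof.
move=> kr rn; have n0 := leq_ltn_trans (leq0n r) rn.
have [k0 k_le_r] := andP kr; have kn := leq_ltn_trans k_le_r rn.
apply: le_trans (ler_ln_ratio n0 kr) _.
by rewrite ler_peMl ?ler1n // ln_ge0 // ler_pdivlMr ?ltr0n // mul1r ler_nat ltnW.
Qed.

Lemma binom_expR_le (n r k : nat) (d : R) : 0 <= d -> (0 < k <= r)%N -> (r < n)%N ->
  'C(n, k)%:R * expR (- ((1 + d) * (k%:R * ln (n%:R / k%:R)))) <=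
  expR (- (d * ln (n%:R / r%:R) - 1)) ^+ k.
Proof.
move=> d0 /andP[k0 kr] rn; have kn := leq_trans kr (ltnW rn).
have kR : (0 : R) < k%:R by rewrite ltr0n.
set c := ln (n%:R / k%:R).
have cr : ln (n%:R / r%:R) <= c.
  by apply: ler_ln_ratio; rewrite ?k0 ?kr // (leq_ltn_trans (leq0n r) rn).
have ratio : expR (- (k%:R * c)) = (k%:R / n%:R) ^+ k.
  rewrite -mulrN -lnV ?posrE ?divr_gt0 ?ltr0n ?(leq_trans k0 kn) // invf_div.
  by rewrite expRM_natl lnK // posrE divr_gt0 ?ltr0n ?(leq_trans k0 kn).
rewrite mulrDl mul1r opprD expRD ratio mulrA.
have binom : 'C(n, k)%:R * (k%:R / n%:R) ^+ k <= expR (k%:R : R).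
  by apply: binom_mul_ratio_le_expR; rewrite k0 kn.
apply: le_trans (ler_wpM2r (expR_ge0 _) binom) _.
rewrite -expRD -expRM_natl ler_expR.
have : 0 <= k%:R * (d * c - d * ln (n%:R / r%:R)).
  by rewrite mulr_ge0 ?(ltW kR) // subr_ge0 ler_wpM2l.
lra.
Qed.

Lemma sum_geom_le_double (x : R) (N : nat) : 0 <= x <= 1 / 2 ->
  \sum_(i < N | (0 < i)%N) x ^+ i <= 2 * x.
Proof.
move=> /andP[x0 x1]; case: N => [|N]; first by rewrite big_ord0 mulr_ge0.
rewrite big_mkcond big_ord_recl /= add0r.
under eq_bigr do rewrite /bump add1n.
have telescope : (1 - x) * \sum_(i < N) x ^+ i.+1 = x - x ^+ N.+1.
  elim: N => [|N IH]; first by rewrite big_ord0 mulr0 expr1 subrr.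
  by rewrite big_ord_recr /= mulrDr IH [x ^+ N.+2]exprS; ring.
have S0 : 0 <= \sum_(i < N) x ^+ i.+1 by rewrite sumr_ge0 // => i _; rewrite exprn_ge0.
have : (1 / 2) * \sum_(i < N) x ^+ i.+1 <= (1 - x) * \sum_(i < N) x ^+ i.+1.
  by rewrite ler_wpM2r //; lra.
have : 0 <= x ^+ N.+1 by rewrite exprn_ge0.
lra.
Qed.

Lemma sum_card_range (n r : nat) (w : nat -> R) :
  \sum_(D : {set 'I_n} | (0 < #|D| <= r)%N) w #|D| =
  \sum_(j < r.+1 | (0 < j)%N) w j *+ 'C(n, j).
Proof.
pose size_of (D : {set 'I_n}) : 'I_r.+1 := inord #|D|.
have size_ofE (D : {set 'I_n}) : (#|D| <= r)%N -> (size_of D : nat) = #|D|.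
  by move=> Dr; rewrite /size_of inordK.
rewrite (partition_big size_of (fun j : 'I_r.+1 => (0 < j)%N)) => [|D /andP[D0 Dr]]; last first.
  by rewrite size_ofE.
apply: eq_bigr => j j0; rewrite -[n in 'C(n, _)]card_ord -card_draws -sumr_const.
apply: eq_big => [D|D /andP[/andP[_ Dr] /eqP <-]]; last by rewrite size_ofE.
rewrite inE; apply/andP/eqP => [[/andP[_ Dr] /eqP <-]|Dj]; first by rewrite size_ofE.
split; first by rewrite Dj j0 -ltnS ltn_ord.
by apply/eqP; apply: val_inj; rewrite /= size_ofE Dj // -ltnS ltn_ord.
Qed.

End Counting.

Section ScanTest.
Variables (R : realType) (n : nat) (p : 'I_n -> 'I_n -> R).
Hypothesis hp : prob_valued (q0 p).

Lemma TkD_ge (D : {set 'I_n}) (A : graph n) (tau : R) :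
  (0 < #|D| < n)%N -> 0 < tau -> tau <= TkD p D A ->
  [/\ 0 < Ex (q0 p) (eD D), Ex (q0 p) (eD D) <= eD D A &
      tau * (#|D|%:R * ln (n%:R / #|D|%:R)) <=
      Ex (q0 p) (eD D) * hfun (eD D A / Ex (q0 p) (eD D) - 1)].
Proof.
move=> Dn t0; rewrite /TkD /=.
set m := Ex _ _; set L := _ * ln _; have L0 : 0 < L by apply: mul_ln_ratio_gt0.
have [->|mn0] := eqVneq m 0; first by move=> /(lt_le_trans t0); rewrite ltxx.
have m0 : 0 < m by rewrite lt_def mn0 Ex_eD_ge0.
rewrite ler_pdivlMr // => key.
have x0 : 0 < eD D A / m - 1.
  rewrite ltNge; apply/negP => x_le0; move: key; rewrite max_r // hfun0 mulr0.
  by apply/negP; rewrite -ltNge mulr_gt0.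
move: key; rewrite max_l ?(ltW x0) // => key; split => //.
by move: x0; rewrite subr_gt0 ltr_pdivlMr // mul1r => /ltW.
Qed.

(* The event [tau <= T_D] is an upper tail event of [e(D)]: cut it at its
   smallest value of [e(D)]. *)
Lemma Pr_TkD_ge (D : {set 'I_n}) (tau : R) : 0 < tau -> (0 < #|D| < n)%N ->
  Pr (q0 p) (fun A => tau <= TkD p D A) <=
  expR (- (tau * (#|D|%:R * ln (n%:R / #|D|%:R)))).
Proof.
move=> t0 Dn.
have [A1 hA1|none] := pickP (fun A => tau <= TkD p D A); last first.
  by rewrite Pr_pred0 ?expR_ge0 // => A; rewrite none.
pose P : pred (graph n) := fun A => tau <= TkD p D A.
case: (@arg_minP _ _ _ A1 P (@eD R n D) hA1) => A0 hA0 hmin.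
have [m0 ms key] := TkD_ge Dn t0 hA0.
apply: le_trans (Pr_upper_tail hp m0 ms hmin) _.
by rewrite ler_expR lerN2.
Qed.

Lemma Tk_ge (r : nat) (A : graph n) (tau : R) : 0 < tau -> tau <= Tk p r A ->
  exists2 D : {set 'I_n}, (0 < #|D| <= r)%N & tau <= TkD p D A.
Proof.
move=> t0 /bigmax_geP[/(lt_le_trans t0)|[D hD hT]]; first by rewrite ltxx.
by exists D.
Qed.

Lemma Pr_scan_test_null (r : nat) (eps : R) : 0 < eps -> (0 < r < n)%N ->
  expR (- (eps / 2 * ln (n%:R / r%:R) - 1)) <= 1 / 2 ->
  Pr (q0 p) (fun A => scan_test p r eps A != false) <=
  2 * expR (- (eps / 2 * ln (n%:R / r%:R) - 1)).
Proof.
move=> e0 /andP[r0 rn] x_small; set x := expR _.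
set tau := 1 + eps / 2; have t0 : 0 < tau by rewrite /tau; lra.
apply: (le_trans (Pr_bigcup_le (P := fun D : {set 'I_n} => (0 < #|D| <= r)%N)
                                (F := fun D A => tau <= TkD p D A) hp _)).
  by move=> A; rewrite /scan_test -/tau => hA; apply: Tk_ge t0 _; case: (_ <= _) hA.
apply: le_trans (ler_sum _ (fun D hD => Pr_TkD_ge t0 _)) _.
  by move=> D /andP[-> /leq_ltn_trans->].
rewrite (sum_card_range n r (fun k => expR (- (tau * (k%:R * ln (n%:R / k%:R)))))).
apply: le_trans (sum_geom_le_double r.+1 _); last by rewrite expR_ge0.
apply: ler_sum => j j0; rewrite -[_ *+ 'C(n, j)]mulr_natl /tau /x.
apply: binom_expR_le => //; first by rewrite divr_ge0 // ltW.
by rewrite j0 -ltnS ltn_ord.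
Qed.

Lemma Ex_qC_eD_sub (rho : R) (C D : {set 'I_n}) : D \subset C ->
  Ex (qC p rho C) (eD D) = rho * Ex (q0 p) (eD D).
Proof.
move=> DC; rewrite !Ex_eD mulr_sumr; apply: eq_bigr => e /andP[e1 e2].
by rewrite /qC (fintype.subsetP DC _ e1) (fintype.subsetP DC _ e2).
Qed.

Lemma most_informative_detection (rho eps : R) (C Ds : {set 'I_n}) :
  (#|Ds| < n)%N -> 0 <= hfun (rho - 1) -> is_most_informative p C Ds ->
  1 + eps <= \big[Num.max/0]_(D : {set 'I_n} | (D \subset C) && (D != finset.set0))
               (Ex (q0 p) (eD D) * hfun (rho - 1) / (#|D|%:R * ln (n%:R / #|D|%:R))) ->
  (1 + eps) * (#|Ds|%:R * ln (n%:R / #|Ds|%:R)) <= Ex (q0 p) (eD Ds) * hfun (rho - 1).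
Proof.
move=> Dsn h0 [DsC [Ds0 Dsmax]] detect.
have L0 : 0 < #|Ds|%:R * ln (n%:R / #|Ds|%:R) :> R.
  by apply: mul_ln_ratio_gt0; rewrite card_gt0 Ds0.
rewrite -ler_pdivlMr // mulrAC; apply: le_trans detect _; apply: bigmax_le.
  by rewrite mulr_ge0 // divr_ge0 ?Ex_eD_ge0 // ltW.
by move=> D /andP[DC D0]; rewrite [leLHS]mulrAC ler_wpM2r //; apply: Dsmax.
Qed.

Lemma Pr_scan_test_alt (r : nat) (rho eps B : R) (C Ds : {set 'I_n}) :
  prob_valued (qC p rho C) -> 1 < rho -> 0 < eps -> (r < n)%N -> #|C| = r ->
  is_most_informative p C Ds ->
  1 + eps <= \big[Num.max/0]_(D : {set 'I_n} | (D \subset C) && (D != finset.set0))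
               (Ex (q0 p) (eD D) * hfun (rho - 1) / (#|D|%:R * ln (n%:R / #|D|%:R))) ->
  B <= ln (n%:R / r%:R) -> B <= Ex (qC p rho C) (eD Ds) ->
  Pr (qC p rho C) (fun A => scan_test p r eps A != true) <=
  expR (- (margin eps ^+ 2 * B / 16)).
Proof.
move=> hqC rho1 e0 rn hC Dsinf detect Bln Bmu.
have [DsC [Ds0 _]] := Dsinf; rewrite -card_gt0 in Ds0.
have Dsr : (#|Ds| <= r)%N by rewrite -hC subset_leq_card.
set a := rho - 1; have a0 : 0 < a by rewrite subr_gt0.
set m := Ex (q0 p) (eD Ds); set L : R := #|Ds|%:R * ln (n%:R / #|Ds|%:R).
have Dsn : (#|Ds| < n)%N by apply: leq_ltn_trans Dsr rn.
have L0 : 0 < L by apply: mul_ln_ratio_gt0; rewrite Ds0.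
have ln_le_L : ln (n%:R / r%:R) <= L by apply: ln_ratio_le_mul; rewrite ?Ds0.
have hH : (1 + eps) * L <= m * hfun a.
  by apply: most_informative_detection detect; rewrite ?hfun_ge0 ?(ltW a0).
have BH : B <= m * hfun a.
  apply: le_trans hH; apply: le_trans Bln (le_trans ln_le_L _).
  by rewrite ler_peMl ?(ltW L0) //; lra.
have m0 : 0 < m.
  rewrite lt_def Ex_eD_ge0 // andbT; apply: contraTneq hH => ->.
  by rewrite mul0r -ltNge mulr_gt0 //; lra.
have mu : Ex (qC p rho C) (eD Ds) = (a + 1) * m by rewrite Ex_qC_eD_sub // /a subrK.
have mu0 : 0 < Ex (qC p rho C) (eD Ds) by rewrite mu mulr_gt0 //; lra.
have dev0 := deviation_ge0 e0 (ltW m0) a0.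
apply: le_trans (Pr_lower_tail hqC mu0 dev0 _) _.
  move=> A; rewrite mu ltNge; apply: contraNN => dev_le; rewrite eqb_id /scan_test /Tk.
  apply: le_trans (le_bigmax_cond _ (fun D => TkD p D A) (_ : (0 < #|Ds| <= r)%N)).
    rewrite /TkD /= -/m gt_eqF // -/L ler_pdivlMr //.
    exact: deviation_keeps_threshold e0 m0 a0 hH dev_le.
  by rewrite Ds0 Dsr.
by rewrite mu ler_expR lerN2 deviation_sqr_ge // -mu.
Qed.

End ScanTest.

Lemma q0_prob_valued (R : realType) (n : nat) (p : 'I_n -> 'I_n -> R) :
  (forall i j : 'I_n, i != j -> 0 <= p i j <= 1) -> prob_valued (q0 p).
Proof. by move=> hp [[i j] /= ij]; apply: hp; rewrite neq_ltn ij. Qed.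

Lemma qC_prob_valued (R : realType) (n : nat) (p : 'I_n -> 'I_n -> R) (rho : R) (C : {set 'I_n}) :
  (forall i j : 'I_n, i != j -> 0 <= p i j <= 1) -> 1 < rho ->
  (forall i j : 'I_n, i \in C -> j \in C -> i != j -> rho * p i j <= 1) ->
  prob_valued (qC p rho C).
Proof.
move=> hp rho1 hrhop [[i j] /= ij]; have i_neq_j : i != j by rewrite neq_ltn ij.
rewrite /qC /=; case: ifP => [/andP[iC jC]|_]; last exact: hp.
have /andP[p0 _] := hp i j i_neq_j.
by rewrite hrhop // andbT mulr_ge0 // ltW // (lt_trans ltr01).
Qed.

(* The detection condition fails for [C = set0], since its maximum is then [0]. *)
Lemma detection_card_gt0 (R : realType) (n r : nat) (f : {set 'I_n} -> {set 'I_n} -> R)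
    (eps : R) : 0 < eps ->
  (forall C : {set 'I_n}, #|C| = r ->
     1 + eps <= \big[Num.max/0]_(D : {set 'I_n} | (D \subset C) && (D != finset.set0)) f C D) ->
  (0 < r)%N.
Proof.
move=> e0 detect; rewrite lt0n; apply/eqP => r0.
have := detect finset.set0; rewrite cards0 r0 => /(_ erefl).
by rewrite big_pred0 => [|D]; [lra | rewrite finset.subset0 andbN].
Qed.

Local Open Scope classical_set_scope.

Section Asymptotics.
Variables (R : realType) (r : nat -> nat).
Hypothesis r_gt0 : forall n, (0 < r n)%N.
Hypothesis r_small : (fun n => (r n)%:R / n%:R : R) @ \oo --> 0.

Lemma ln_ratio_gt (B : R) : \forall n \near \oo, B < ln (n%:R / (r n)%:R).
Proof.
move/cvgr_dist_lt: r_small => /(_ _ (expR_gt0 (- B))).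
apply: filterS2 (nbhs_infty_gt 0) => n n0; rewrite sub0r normrN.
have rn0 : (0 : R) < (r n)%:R / n%:R by rewrite divr_gt0 ?ltr0n.
rewrite gtr0_norm // => small.
by rewrite -invf_div lnV ?posrE // ltrNr -ltr_expR lnK ?posrE.
Qed.

Lemma card_lt_eventually : \forall n \near \oo, (r n < n)%N.
Proof.
apply: filterS (ln_ratio_gt 0) => n; rewrite ltnNge; apply: contraTN => nr.
by rewrite -leNgt ln_le0 // ler_pdivrMr ?ltr0n // mul1r ler_nat.
Qed.

Variables (p : forall n, 'I_n -> 'I_n -> R) (eps : R).
Arguments p : clear implicits.
Hypothesis p_prob : forall n (i j : 'I_n), i != j -> 0 <= p n i j <= 1.
Hypothesis eps_gt0 : 0 < eps.

Lemma type_I_error_vanishes (e : R) : 0 < e ->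
  \forall n \near \oo, Pr (q0 (p n)) (fun A => scan_test (p n) (r n) eps A != false) <= e.
Proof.
move=> e0; set w := Num.min (e / 2) (1 / 2).
have w0 : 0 < w by rewrite lt_min !divr_gt0.
pose B := (1 - ln w) / (eps / 2).
apply: filterS2 (ln_ratio_gt B) card_lt_eventually => n lnB rn.
pose x := expR (- (eps / 2 * ln (n%:R / (r n)%:R) - 1)).
have xw : x <= w.
  rewrite /x -[w]lnK ?posrE // ler_expR.
  have : eps / 2 * B < eps / 2 * ln (n%:R / (r n)%:R) by rewrite ltr_pM2l // divr_gt0.
  have -> : eps / 2 * B = 1 - ln w by rewrite /B mulrC mulfVK // gt_eqF // divr_gt0.
  lra.
have rn' : (0 < r n < n)%N by rewrite r_gt0 rn.
have x_small : x <= 1 / 2 by apply: le_trans xw _; rewrite ge_min lexx orbT.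
apply: le_trans (Pr_scan_test_null (q0_prob_valued (@p_prob n)) eps_gt0 rn' x_small) _.
rewrite -/x; have : w <= e / 2 by rewrite ge_min lexx.
lra.
Qed.

Variables (rho : forall n, {set 'I_n} -> R) (Dstar : forall n, {set 'I_n} -> {set 'I_n}).
Arguments rho : clear implicits. Arguments Dstar : clear implicits.
Hypothesis rho_gt1 : forall n (C : {set 'I_n}), #|C| = r n -> 1 < rho n C.
Hypothesis rho_p_le1 : forall n (C : {set 'I_n}) (i j : 'I_n), #|C| = r n -> i \in C -> j \in C ->
  i != j -> rho n C * p n i j <= 1.
Hypothesis Dstar_informative : forall n (C : {set 'I_n}), #|C| = r n ->
  is_most_informative (p n) C (Dstar n C).
Hypothesis Dstar_mean_large : forall M : R,
  \forall n \near \oo, forall C : {set 'I_n}, #|C| = r n ->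
  M <= Ex (qC (p n) (rho n C) C) (eD (Dstar n C)).
Hypothesis detection : forall n (C : {set 'I_n}), #|C| = r n ->
  1 + eps <= \big[Num.max/0]_(D : {set 'I_n} | (D \subset C) && (D != finset.set0))
               (Ex (q0 (p n)) (eD D) * hfun (rho n C - 1) / (#|D|%:R * ln (n%:R / #|D|%:R))).

Lemma type_II_error_vanishes (e : R) : 0 < e ->
  \forall n \near \oo, \big[Num.max/0]_(C : {set 'I_n} | #|C| == r n)
      Pr (qC (p n) (rho n C) C) (fun A => scan_test (p n) (r n) eps A != true) <= e.
Proof.
move=> e0; have k0 := margin_gt0 eps_gt0.
pose B := 16 * - ln e / margin eps ^+ 2.
apply: filterS3 (ln_ratio_gt B) card_lt_eventually (Dstar_mean_large B) => n lnB rn EB.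
apply: bigmax_le => [|C /eqP hC]; first exact: ltW.
have hqC := qC_prob_valued (@p_prob n) (rho_gt1 hC) (fun i j => @rho_p_le1 n C i j hC).
apply: le_trans (Pr_scan_test_alt (q0_prob_valued (@p_prob n)) hqC (rho_gt1 hC) eps_gt0 rn hC
  (Dstar_informative hC) (detection hC) (ltW lnB) (EB C hC)) _.
rewrite -[leRHS]lnK ?posrE // ler_expR /B.
have -> : margin eps ^+ 2 * (16 * - ln e / margin eps ^+ 2) / 16 = - ln e.
  by field; rewrite gt_eqF.
by rewrite opprK.
Qed.

End Asymptotics.

Theorem theorem2 (R : realType)
  (p : forall n : nat, 'I_n -> 'I_n -> R)
  (r : nat -> nat)
  (rho : forall n : nat, {set 'I_n} -> R)
  (eps : R)
  (Dstar : forall n : nat, {set 'I_n} -> {set 'I_n}) :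
  (* standing assumptions *)
  (forall n (i j : 'I_n), i != j -> 0 <= p n i j <= 1) ->
  (forall n (i j : 'I_n), i != j -> p n i j = p n j i) ->
  (forall n (C : {set 'I_n}), #|C| = r n -> 1 < rho n C) ->
  (forall n (C : {set 'I_n}) (i j : 'I_n), #|C| = r n -> i \in C -> j \in C -> i != j ->
     rho n C * p n i j <= 1) ->
  0 < eps ->
  (* D^*_C is a most informative subgraph of C *)
  (forall n (C : {set 'I_n}), #|C| = r n -> is_most_informative (p n) C (Dstar n C)) ->
  (* r = o(n) *)
  (fun n => (r n)%:R / n%:R : R) @ \oo --> 0 ->
  (* E_C[e(D^*_C)] -> oo for all C with |C| = r (uniformly in C) *)
  (forall M : R, \forall n \near \oo, forall C : {set 'I_n}, #|C| = r n ->
       M <= Ex (qC (p n) (rho n C) C) (eD (Dstar n C))) ->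
  (* detection condition *)
  (forall n (C : {set 'I_n}), #|C| = r n ->
     1 + eps <= \big[Num.max/0]_(D : {set 'I_n} | (D \subset C) && (D != finset.set0))
                  (Ex (q0 (p n)) (eD D) * hfun (rho n C - 1)
                     / (#|D|%:R * ln (n%:R / #|D|%:R)))) ->
  (* the scan test is asymptotically powerful *)
  (fun n => risk (p n) (r n) (rho n) (scan_test (p n) (r n) eps)) @ \oo --> 0.
Proof.
move=> hp _ hrho hrhop heps hD hr hE hdet.
have hr0 n : (0 < r n)%N by apply: detection_card_gt0 heps (hdet n).
apply/cvgrPdist_le => e e0; have e2 : 0 < e / 2 by rewrite divr_gt0.
apply: filterS2 (type_I_error_vanishes hr0 hr hp heps e2)
  (type_II_error_vanishes hr0 hr hp heps hrho hrhop hD hE hdet e2) => n hI hII.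
rewrite sub0r normrN /risk ger0_norm; first lra.
by rewrite addr_ge0 ?bigmax_ge_id ?(Pr_ge0 _ (q0_prob_valued (@hp n))).
Qed.
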